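(* For $n\ge1$, any Sherali–Adams refutation of the binary $\mathrm{PHP}^{n+1}_n$ has to contain at least $\left(\frac65\right)^{n/16}-1$ terms.
   Context: Binary Pigeonhole Principle $\mathrm{PHP}^{m}_n$: pigeons $[m]$, holes $[n]$, $r=\lceil\log_2 n\rceil$, each hole $a$ given a distinct $r$-bit representation $a_1\dots a_r$. Variables $P_{i,j}$ ($i\in[m]$, $j\in[r]$); $X^1=X$, $X^0=\neg X$. Clauses: for every hole $a$ and pigeons $i\ne i'$, $\bigvee_{j}P_{i,j}^{1-a_j}\vee\bigvee_j P_{i',j}^{1-a_j}$; and if $n$ is not a power of $2$, for each pigeon $i$ and each $r$-bit string $c$ representing no hole, $\bigvee_j P_{i,j}^{1-c_j}$. Sherali–Adams (SA): for every conjunction $D$ of literals (as a set; $\emptyset$ empty) there is a real variable (term) $Z_D$, $Z_\emptyset=1$. Lifts by $D$: of a clause $l_1\vee\dots\vee l_t$, $Z_{l_1\wedge D}+\dots+Z_{l_t\wedge D}\ge Z_D$; of negation equalities, $Z_{v\wedge D}+Z_{\neg v\wedge D}=Z_D$; of bounds, $0\le Z_{l\wedge D}\le Z_D$. An SA refutation is a set of such lifted constraints (by conjunctions of any size) with empty common real solution set; the terms it contains are the variables $Z_D$ occurring in its constraints. *)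

From mathcomp Require Import all_boot all_order all_algebra.
From mathcomp Require Import reals exp.
From Stdlib Require List.
Set Implicit Arguments. Unset Strict Implicit. Unset Printing Implicit Defensive.
Import Order.TTheory GRing.Theory Num.Theory.
Local Open Scope ring_scope.

(* Binary PHP^m_n : pigeons 'I_m, holes 'I_n, r = ceil(log2 n) = up_log 2 n bits. *)
Definition nbits (n : nat) : nat := up_log 2 n.

Definition var (m n : nat) := ('I_m * 'I_(nbits n))%type.
(* literal (v, true) = v,  (v, false) = ~ v *)
Definition lit (m n : nat) := (var m n * bool)%type.
Definition bits (n : nat) := {ffun 'I_(nbits n) -> bool}.

(* the disjunction \/_j P_{i,j}^{1 - c_j}, as a list of literals *)
Definition pig_block (m n : nat) (i : 'I_m) (c : bits n) : seq (lit m n) :=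
  [seq ((i, j), ~~ c j) | j <- enum 'I_(nbits n)].

Definition php_clause (m n : nat) (enc : 'I_n -> bits n) (C : seq (lit m n)) : Prop :=
  (exists (a : 'I_n) (i i' : 'I_m),
      i != i' /\ C = pig_block i (enc a) ++ pig_block i' (enc a))
  \/ ((n != 2 ^ nbits n)%N /\
      exists (i : 'I_m) (c : bits n), c \notin codom enc /\ C = pig_block i c).

(* lifted constraints; conjunctions D are finite sets of literals *)
Inductive constr (m n : nat) :=
  | CClause of seq (lit m n) & {set lit m n}
  | CNeg of var m n & {set lit m n}
  | CBound of lit m n & {set lit m n}.

Definition valid_constr (m n : nat) (enc : 'I_n -> bits n) (c : constr m n) : Prop :=
  match c with
  | CClause C _ => php_clause enc C
  | _ => True
  end.

Definition sat_constr (R : realType) (m n : nat) (Z : {set lit m n} -> R)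
    (c : constr m n) : Prop :=
  match c with
  | CClause C D => Z D <= \sum_(l <- C) Z (l |: D)
  | CNeg v D => Z ((v, true) |: D) + Z ((v, false) |: D) = Z D
  | CBound l D => 0 <= Z (l |: D) <= Z D
  end.

Definition constr_terms (m n : nat) (c : constr m n) : {set {set lit m n}} :=
  match c with
  | CClause C D => D |: [set l |: D | l in C]
  | CNeg v D => [set D; (v, true) |: D; (v, false) |: D]
  | CBound l D => [set D; l |: D]
  end.

Definition SA_terms (m n : nat) (cs : seq (constr m n)) : {set {set lit m n}} :=
  \bigcup_(c <- cs) constr_terms c.

Definition SA_refutation (R : realType) (m n : nat) (enc : 'I_n -> bits n)
    (cs : seq (constr m n)) : Prop :=
  (forall c, List.In c cs -> valid_constr enc c) /\
  ~ (exists Z : {set lit m n} -> R,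
        Z set0 = 1 /\ forall c, List.In c cs -> sat_constr Z c).

From mathcomp Require Import all_boot all_order all_algebra all_fingroup.
From mathcomp Require Import reals exp sequences zify ring lra.
Set Implicit Arguments. Unset Strict Implicit. Unset Printing Implicit Defensive.
Import Order.TTheory GRing.Theory Num.Theory.

(* Suppose the refutation has fewer than e^(n/80) - 1 terms.  We choose a set
   H of at least 3n/4 holes on which every bit value is taken by no hole or by
   a quarter of H, and match the pigeons to the other holes.  Greedily adding
   pigeon-hole pairs chosen by averaging falsifies every term that mentions
   many unmatched pigeons non-trivially: each step removes a fixed fraction of
   the surviving such terms, so after |H|/5 steps none is left.  Then
   Z_D := Pr[pi satisfies D | pi q = extra hole], over the permutations pi
   extending the matching, with q an unmatched pigeon whose literals in D hold
   on all of H, is a solution of every lifted constraint: swapping two such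
   pigeons shows Z_D does not depend on q, and choosing q outside a clause or
   variable puts the relevant pigeons into genuine, distinct holes.  This
   contradicts the refutation, and (6/5)^(n/16) <= e^(n/80). *)

Lemma leq_card_bigcup (I : Type) (X : finType) (r : seq I) (F : I -> {set X}) :
  (#|\bigcup_(i <- r) F i| <= \sum_(i <- r) #|F i|)%N.
Proof.
elim: r => [|i r IHr]; first by rewrite !big_nil cards0.
by rewrite !big_cons (leq_trans (leq_card_setU _ _)) // leq_add2l.
Qed.

Lemma exchange_card (X Y : finType) (A : {set X}) (B : {set Y}) (rel : X -> Y -> bool) :
  (\sum_(x in A) #|[set y in B | rel x y]| = \sum_(y in B) #|[set x in A | rel x y]|)%N.
Proof.
under eq_bigr do rewrite -sum1_card.
under [RHS]eq_bigr do rewrite -sum1_card.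
rewrite !pair_big_dep /= (reindex (fun p : Y * X => (p.2, p.1))) /=; last first.
  by exists (fun p : X * Y => (p.2, p.1)) => -[].
by apply: eq_bigl => -[y x] /=; rewrite !inE andbCA !andbA.
Qed.

Lemma exists_ge_average (X : finType) (A : {set X}) (f : X -> nat) :
  A != set0 -> exists2 x, x \in A & (\sum_(y in A) f y <= #|A| * f x)%N.
Proof.
case/set0Pn => x0 x0A; have [x xA fx_max] := @arg_maxnP _ x0 (mem A) f x0A.
by exists x => //; rewrite -sum_nat_const leq_sum.
Qed.

Lemma card_set_pairs (A B : finType) (S : {set A * B}) :
  #|S| = (\sum_(a : A) #|[set b | (a, b) \in S]|)%N.
Proof.
transitivity (\sum_(a : A) \sum_(b | (a, b) \in S) 1)%N.
  by rewrite -sum1_card pair_big_dep; apply: eq_bigl => -[].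
by apply: eq_bigr => a _; rewrite sum1dep_card.
Qed.

Section Terms.
Variables m n : nat.

Definition constr_lift (c : constr m n) : {set lit m n} :=
  match c with CClause _ D | CNeg _ D | CBound _ D => D end.

Lemma constr_lift_term c : constr_lift c \in constr_terms c.
Proof. by case: c => [C D|v D|l D]; rewrite /= !inE eqxx. Qed.

Lemma constr_terms_sub (cs : seq (constr m n)) c :
  List.In c cs -> constr_terms c \subset SA_terms cs.
Proof.
rewrite /SA_terms; elim: cs => [//|c' cs IHcs] /=; rewrite big_cons.
by case=> [->|/IHcs c_cs]; [apply: subsetUl|apply: subset_trans c_cs (subsetUr _ _)].
Qed.

End Terms.

Section Restriction.
Variables (n : nat) (enc : 'I_n -> bits n).
Hypothesis enc_inj : injective enc.
Local Notation pigeon := 'I_n.+1.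
Local Notation L := (lit n.+1 n).

(* Permutations of ['I_n.+1] send pigeons to holes, value [n] being one extra
   hole; its code is junk and is never read. *)
Definition extra_hole : pigeon := ord_max.

Definition hole_code (x : pigeon) : bits n :=
  if insub (val x) is Some a then enc a else [ffun=> false].

Lemma neq_extra_hole (x : pigeon) : (x != extra_hole) = (x < n)%N.
Proof. by rewrite -val_eqE /= neq_ltn [(n < x)%N]ltnNge leq_ord orbF. Qed.

Definition real_holes := [set x : pigeon | (x < n)%N].

Lemma card_real_holes : #|real_holes| = n.
Proof.
have -> : real_holes = ~: [set extra_hole].
  by apply/setP => x; rewrite !inE neq_extra_hole.
by rewrite cardsCs setCK cards1 card_ord subn1.
Qed.

Lemma hole_codeE (x : pigeon) (xn : (x < n)%N) : hole_code x = enc (Ordinal xn).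
Proof. by rewrite /hole_code insubT. Qed.

Lemma hole_code_inj (x y : pigeon) :
  (x < n)%N -> (y < n)%N -> hole_code x = hole_code y -> x = y.
Proof.
move=> xn yn; rewrite (hole_codeE xn) (hole_codeE yn) => /enc_inj [xy].
exact: val_inj.
Qed.

Lemma hole_code_codom (x : pigeon) : (x < n)%N -> hole_code x \in codom enc.
Proof. by move=> xn; rewrite (hole_codeE xn) codom_f. Qed.

Lemma perm_real_hole (pi : {perm pigeon}) (q i : pigeon) :
  pi q = extra_hole -> q != i -> (pi i < n)%N.
Proof. by move=> pq qi; rewrite -neq_extra_hole -pq (inj_eq perm_inj) eq_sym. Qed.

Variable H : {set pigeon}.

Definition forced (j : 'I_(nbits n)) (b : bool) := [forall x in H, hole_code x j == b].

(* The pigeon in the extra hole is treated as sitting in an unknown hole of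
   [H]: only the literals that hold on all of [H] are true for it. *)
Definition lit_holds (x : pigeon) (l : L) :=
  if (x < n)%N then hole_code x l.1.2 == l.2 else forced l.1.2 l.2.

Definition satisfies (pi : {perm pigeon}) (D : {set L}) :=
  [forall l in D, lit_holds (pi l.1.1) l].

Lemma satisfiesU1 pi l D :
  satisfies pi (l |: D) = lit_holds (pi l.1.1) l && satisfies pi D.
Proof.
apply/forall_inP/andP => [sat|[sat_l /forall_inP sat_D] x].
  by split; [|apply/forall_inP => x xD]; apply: sat; rewrite !inE ?eqxx ?xD ?orbT.
by rewrite in_setU1 => /predU1P [->|/sat_D].
Qed.

Variables (s0 : {perm pigeon}) (P : {set pigeon}).
Hypothesis matched_real : forall p, p \in P -> (s0 p < n)%N.
Hypothesis unmatched_in_H : forall x : pigeon, (x < n)%N -> x \notin s0 @: P -> x \in H.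

Definition extensions := [set pi : {perm pigeon} | [forall p in P, pi p == s0 p]].

Definition relevant (D : {set L}) := [set p : pigeon | (p \notin P) &&
  [exists l in D, (l.1.1 == p) && ~~ forced l.1.2 l.2]].

Definition killed (D : {set L}) :=
  [exists l in D, (l.1.1 \in P) && ~~ lit_holds (s0 l.1.1) l].

Definition count_at (D : {set L}) (q : pigeon) :=
  #|[set pi in extensions | satisfies pi D && (pi q == extra_hole)]|.

(* The solution is [Z_D := count D / count set0]; by [count_at_swap] any
   unmatched pigeon irrelevant to [D] may be sent to the extra hole. *)
Definition count (D : {set L}) :=
  if [pick q | (q \notin P) && (q \notin relevant D)] is Some q
  then count_at D q else 0%N.

Lemma extension_unmatched pi q :
  pi \in extensions -> q \notin P -> pi q \notin s0 @: P.
Proof.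
rewrite inE => /forall_inP pi_s0 qP; apply/imsetP => -[p pP].
by rewrite -(eqP (pi_s0 p pP)) => /perm_inj qp; rewrite qp pP in qP.
Qed.

Lemma lit_holds_forced pi q l : pi \in extensions -> q \notin P ->
  forced l.1.2 l.2 -> lit_holds (pi q) l.
Proof.
move=> pi_ext qP l_forced; rewrite /lit_holds; case: ifP => // qn.
exact/(forall_inP l_forced)/unmatched_in_H/extension_unmatched.
Qed.

Lemma irrelevant_forced D q l : q \notin P -> q \notin relevant D ->
  l \in D -> l.1.1 = q -> forced l.1.2 l.2.
Proof.
move=> qP qD lD lq; apply: contraNT qD => l_free; rewrite inE qP.
by apply/exists_inP; exists l; rewrite ?lq ?eqxx.
Qed.

(* Transposing two unmatched pigeons irrelevant to [D] preserves satisfaction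
   of [D], since all their literals in [D] are forced. *)
Lemma count_at_swap D q q' : q \notin P -> q' \notin P ->
  q \notin relevant D -> q' \notin relevant D -> count_at D q = count_at D q'.
Proof.
have le_swap a b : a \notin P -> b \notin P -> a \notin relevant D ->
    b \notin relevant D -> (count_at D a <= count_at D b)%N.
  move=> aP bP aD bD; rewrite /count_at -(card_imset _ (mulgI (tperm a b))).
  apply/subset_leq_card/subsetP => _ /imsetP [pi /setIdP [pi_ext /andP [sat pia]] ->].
  have tP p : p \in P -> tperm a b p = p.
    by move=> pP; rewrite tpermD //; [apply: contraNneq aP|apply: contraNneq bP] => ->.
  rewrite !inE permM tpermR pia andbT; apply/andP; split.
    apply/forall_inP => p pP; rewrite permM tP //.
    by move: pi_ext; rewrite inE => /forall_inP ->.
  apply/forall_inP => l lD; rewrite permM.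
  case: tpermP => [la|lb|_ _]; last exact: (forall_inP sat).
  - by apply: lit_holds_forced; rewrite ?(irrelevant_forced aP aD lD la).
  - by apply: lit_holds_forced; rewrite ?(irrelevant_forced bP bD lD lb).
by move=> qP q'P qD q'D; apply/eqP; rewrite eqn_leq !le_swap.
Qed.

Lemma countE D q : q \notin P -> q \notin relevant D -> count D = count_at D q.
Proof.
move=> qP qD; rewrite /count; case: pickP => [q' /andP [q'P q'D]|/(_ q)].
  exact: count_at_swap.
by rewrite qP qD.
Qed.

Lemma killed_count D : killed D -> count D = 0%N.
Proof.
case/exists_inP => l lD /andP [lP l_false]; rewrite /count; case: pickP => // q _.
apply/eqP; rewrite cards_eq0; apply/eqP/setP => pi; rewrite !inE.
apply/negP => /andP [/forall_inP pi_s0 /andP [/forall_inP sat _]].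
by move: (sat l lD); rewrite (eqP (pi_s0 _ lP)) (negbTE l_false).
Qed.

Lemma killedU1 D l : killed D -> killed (l |: D).
Proof.
by case/exists_inP => x xD xP; apply/exists_inP; exists x; rewrite ?setU1r.
Qed.

Lemma relevantU1 D l q :
  q \notin relevant D -> q != l.1.1 -> q \notin relevant (l |: D).
Proof.
move=> qD ql; apply: contra qD; rewrite !inE => /andP [-> /exists_inP [x]].
rewrite in_setU1 => /predU1P [-> /andP [/eqP lq]|xD xq]; first by rewrite lq eqxx in ql.
by apply/exists_inP; exists x.
Qed.

Lemma exists_unmatched : exists q, q \notin P.
Proof.
apply/existsP; apply: contraT; rewrite negb_exists => /forallP allP.
have /subset_leq_card : s0 @: P \subset real_holes.
  by apply/subsetP => _ /imsetP [p pP ->]; rewrite inE matched_real.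
rewrite card_imset ?card_real_holes; last exact: perm_inj.
have -> : P = setT by apply/setP => x; move: (allP x); rewrite negbK inE.
by rewrite cardsT card_ord ltnn.
Qed.

Lemma count_set0_gt0 : (0 < count set0)%N.
Proof.
have [q qP] := exists_unmatched.
have q_irr : q \notin relevant set0.
  by rewrite inE qP; apply/exists_inP => -[l]; rewrite in_set0.
rewrite (countE qP q_irr) card_gt0; apply/set0Pn.
pose d := (s0^-1 extra_hole)%g.
have dP : d \notin P by apply/negP => /matched_real; rewrite permKV /= ltnn.
exists (tperm q d * s0)%g; rewrite !inE permM tpermL permKV eqxx andbT.
apply/andP; split; last by apply/forall_inP => l; rewrite in_set0.
apply/forall_inP => p pP; rewrite permM tpermD //.
  by apply: contraNneq qP => ->.
by apply: contraNneq dP => ->.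
Qed.

Lemma pig_block_holds (pi : {perm pigeon}) (i : pigeon) (c : bits n) :
  (pi i < n)%N -> hole_code (pi i) != c ->
  has (fun l => lit_holds (pi l.1.1) l) (pig_block i c).
Proof.
move=> pin pic; have [j cj] : exists j, hole_code (pi i) j != c j.
  apply/existsP; apply: contraNT pic => /existsPn pic.
  by apply/eqP/ffunP => j; apply/eqP/negPn.
apply/hasP; exists ((i, j), ~~ c j); first by apply: map_f; rewrite mem_enum.
by rewrite /lit_holds /= pin; move: cj; case: (hole_code _ j); case: (c j).
Qed.

Lemma pig_block_pigeon (i : pigeon) (c : bits n) l : l \in pig_block i c -> l.1.1 = i.
Proof. by case/mapP => j _ ->. Qed.

(* A clause mentions at most two pigeons; once none of them is in the extra
   hole, it is satisfied because distinct holes have distinct genuine codes. *)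
Lemma php_clause_cover C : php_clause enc C -> exists X : {set pigeon},
  [/\ (#|X| <= 2)%N, forall l, l \in C -> l.1.1 \in X &
      forall q (pi : {perm pigeon}), q \notin X -> pi q = extra_hole ->
        has (fun l => lit_holds (pi l.1.1) l) C].
Proof.
case=> [[a [i [i' [ii' ->]]]]|[_ [i [c [c_nonhole ->]]]]].
  exists [set i; i']; split; first by rewrite cards2 ii'.
    by move=> l; rewrite mem_cat => /orP [] /pig_block_pigeon ->; rewrite !inE eqxx ?orbT.
  move=> q pi; rewrite !inE negb_or => /andP [iq i'q] pq.
  have [ni ni'] := (perm_real_hole pq iq, perm_real_hole pq i'q).
  rewrite has_cat; have [ia|ia] := eqVneq (hole_code (pi i)) (enc a); last first.
    by rewrite pig_block_holds.
  apply/orP; right; rewrite pig_block_holds // -ia.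
  by apply: contra_neq ii' => e; have /perm_inj -> := hole_code_inj ni' ni e.
exists [set i]; split; first by rewrite cards1.
  by move=> l /pig_block_pigeon ->; rewrite inE.
move=> q pi; rewrite inE => iq pq; have ni := perm_real_hole pq iq.
by rewrite pig_block_holds //; apply: contraNneq c_nonhole => <-; apply: hole_code_codom.
Qed.

Variable T : {set {set L}}.
Hypothesis wide_killed : forall D, D \in T ->
  (#|~: P| <= #|relevant D| + 2)%N -> killed D.

Lemma killed_or_free D (X : {set pigeon}) : D \in T -> (#|X| <= 2)%N ->
  killed D \/ exists q, [/\ q \notin P, q \notin relevant D & q \notin X].
Proof.
move=> DT X2.
case: (boolP [exists q, [&& q \notin P, q \notin relevant D & q \notin X]]).
  by case/existsP => q /and3P [qP qD qX]; right; exists q.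
move/existsPn => no_q; left; apply: wide_killed => //.
have /subset_leq_card : ~: P \subset relevant D :|: X.
  apply/subsetP => q; rewrite in_setC in_setU => qP.
  by move: (no_q q); rewrite qP /= negb_and !negbK.
by move/leq_trans; apply; rewrite (leq_trans (leq_card_setU _ _)) ?leq_add2l.
Qed.

Lemma count_neg v D : D \in T ->
  (count ((v, true) |: D) + count ((v, false) |: D) = count D)%N.
Proof.
move=> DT; have X1 : (#|[set v.1]| <= 2)%N by rewrite cards1.
have [kD|[q [qP qD]]] := killed_or_free DT X1.
  by rewrite !killed_count ?killedU1.
rewrite in_set1 => qv; rewrite (countE qP qD).
rewrite (countE qP (relevantU1 (l := (v, true)) qD qv)).
rewrite (countE qP (relevantU1 (l := (v, false)) qD qv)).
rewrite /count_at -[RHS](cardsID [set pi : {perm pigeon} | lit_holds (pi v.1) (v, true)]).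
congr (_ + _)%N; apply: eq_card => pi; rewrite !inE satisfiesU1 /=.
  by case: (lit_holds _ _); rewrite /= ?andbF ?andbT.
case: (boolP (pi q == extra_hole)) => [/eqP pq|]; last by rewrite !andbF.
have vn := perm_real_hole pq qv; rewrite /lit_holds vn.
by case: (hole_code _ _); case: [forall _ in _, _]; case: (satisfies _ _).
Qed.

Lemma count_U1_le l D : D \in T -> (count (l |: D) <= count D)%N.
Proof.
move=> DT; have X1 : (#|[set l.1.1]| <= 2)%N by rewrite cards1.
have [kD|[q [qP qD]]] := killed_or_free DT X1.
  by rewrite !killed_count ?killedU1.
rewrite in_set1 => ql; rewrite (countE qP qD) (countE qP (relevantU1 qD ql)).
apply/subset_leq_card/subsetP => pi.
by rewrite !inE satisfiesU1 => /and3P [-> /andP [_ ->]].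
Qed.

Lemma count_clause C D : php_clause enc C -> D \in T ->
  (count D <= \sum_(l <- C) count (l |: D))%N.
Proof.
move=> /php_clause_cover [X [X2 C_X C_sat]] DT.
have [kD|[q [qP qD qX]]] := killed_or_free DT X2; first by rewrite killed_count.
rewrite (countE qP qD) big_seq (eq_bigr (fun l => count_at (l |: D) q)); last first.
  move=> l lC; apply/countE/relevantU1 => //.
  by apply: contraNneq qX => ->; apply: C_X.
rewrite -big_seq; apply: leq_trans (leq_card_bigcup _ _); apply/subset_leq_card.
apply/subsetP => pi; rewrite inE => /andP [pi_ext /andP [sat /eqP pq]].
have /hasP [l lC l_holds] := C_sat q pi qX pq.
rewrite bigcup_seq; apply/bigcupP; exists l => //.
by rewrite inE pi_ext satisfiesU1 l_holds sat pq eqxx.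
Qed.

Local Open Scope ring_scope.

Lemma SA_solution (R : realType) (cs : seq (constr n.+1 n)) : SA_terms cs \subset T ->
  exists Z : {set L} -> R, Z set0 = 1 /\
    forall c, List.In c cs -> valid_constr enc c -> sat_constr Z c.
Proof.
move=> csT; have c0_neq0 : (count set0)%:R != 0 :> R.
  by rewrite pnatr_eq0 -lt0n count_set0_gt0.
exists (fun D => (count D)%:R / (count set0)%:R); split; first exact: divff.
move=> c c_cs c_valid.
have DT := subsetP csT _ (subsetP (constr_terms_sub c_cs) _ (constr_lift_term c)).
case: c {c_cs} c_valid DT => [C D|v D|l D] /= c_valid DT.
- rewrite -mulr_suml ler_wpM2r ?invr_ge0 ?ler0n // -natr_sum ler_nat.
  exact: count_clause.
- by rewrite -mulrDl -natrD count_neg.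
- by rewrite divr_ge0 ?ler0n //= ler_wpM2r ?invr_ge0 ?ler0n // ler_nat count_U1_le.
Qed.

End Restriction.

Section BitCodes.
Variable n : nat.
Local Notation r := (nbits n).

Definition flip_bit (j : 'I_r) (c : bits n) : bits n :=
  [ffun k => if k == j then ~~ c k else c k].

Lemma flip_bitK j : involutive (flip_bit j).
Proof. by move=> c; apply/ffunP => k; rewrite !ffunE; case: eqP; rewrite ?negbK. Qed.

Definition fix2 (j0 j1 : 'I_r) (x y : bool) := [set c : bits n | (c j0 == x) && (c j1 == y)].

Lemma fix2C j0 j1 x y : fix2 j0 j1 x y = fix2 j1 j0 y x.
Proof. by apply/setP => c; rewrite !inE andbC. Qed.

Lemma card_fix2_flip j0 j1 x y : j1 != j0 -> #|fix2 j0 j1 x y| = #|fix2 j0 j1 (~~ x) y|.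
Proof.
move=> j10; rewrite -(card_imset _ (inv_inj (flip_bitK j0))).
rewrite (can_imset_pre _ (flip_bitK j0)); apply: eq_card => c.
by rewrite !inE !ffunE eqxx (negbTE j10) eqb_negLR.
Qed.

Lemma card_fix2 j0 j1 x y : j0 != j1 -> (4 * #|fix2 j0 j1 x y| = 2 ^ r)%N.
Proof.
move=> j01; have j10 : j1 != j0 by rewrite eq_sym.
have fix2_tt x' y' : #|fix2 j0 j1 x' y'| = #|fix2 j0 j1 true true|.
  have flip1 x'' y'' : #|fix2 j0 j1 x'' y''| = #|fix2 j0 j1 x'' (~~ y'')|.
    by rewrite fix2C card_fix2_flip // -fix2C.
  by case: x'; case: y'; rewrite ?(card_fix2_flip false) //; apply: flip1.
have -> : (2 ^ r = \sum_(c : bits n) 1)%N by rewrite sum1_card card_ffun card_bool card_ord.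
rewrite (partition_big (fun c : bits n => (c j0, c j1)) xpredT) //=.
rewrite (eq_bigr (fun=> #|fix2 j0 j1 true true|)); last first.
  move=> [x' y'] _; rewrite -(fix2_tt x' y') sum1dep_card /fix2.
  by apply: eq_card => c; rewrite !inE xpair_eqE.
by rewrite big_const card_prod card_bool iter_addn_0 fix2_tt mulnC.
Qed.

End BitCodes.

Lemma exp2_nbits_lt n : (0 < n)%N -> (2 ^ nbits n < 2 * n)%N.
Proof.
rewrite /nbits leq_eqVlt => /predU1P [<-|n_gt1]; first by [].
have /andP [lt_n _] := up_log_bounds (isT : (1 < 2)%N) n_gt1.
have up_gt0 : (0 < up_log 2 n)%N by rewrite up_log_gt0 n_gt1.
by rewrite -(prednK up_gt0) expnS ltn_mul2l.
Qed.

Section Balanced.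
Variables (n : nat) (enc : 'I_n -> bits n).
Hypothesis enc_inj : injective enc.
Hypothesis n_gt0 : (0 < n)%N.
Local Notation pigeon := 'I_n.+1.

Definition bit_count (S : {set pigeon}) j b := #|[set x in S | hole_code enc x j == b]|.

Definition balanced (S : {set pigeon}) :=
  forall j b, bit_count S j b = 0%N \/ (#|S| <= 4 * bit_count S j b)%N.

Lemma bit_countN S j b : (bit_count S j b + bit_count S j (~~ b))%N = #|S|.
Proof.
rewrite /bit_count -(cardsID [set x | hole_code enc x j == b] S).
congr (_ + _)%N; apply: eq_card => x; rewrite !inE andbC //.
by case: (hole_code enc x j); case: b.
Qed.

Lemma card_holes_fix2 j0 j1 x y : j0 != j1 ->
  (4 * #|[set a in real_holes n | (hole_code enc a j0 == x) && (hole_code enc a j1 == y)]|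
     <= 2 ^ nbits n)%N.
Proof.
move=> j01; rewrite -(card_fix2 x y j01) leq_mul2l /=.
set A := [set a in _ | _]; have code_inj : {in A &, injective (hole_code enc)}.
  by move=> a a'; rewrite !inE => /andP [an _] /andP [a'n _]; apply: hole_code_inj.
rewrite -(card_in_imset code_inj); apply/subset_leq_card/subsetP => _ /imsetP [a aA ->].
by move: aA; rewrite !inE => /andP [].
Qed.

Lemma balanced_bit_class j0 b0 :
  (2 * n < 3 * bit_count (real_holes n) j0 b0)%N ->
  balanced [set x in real_holes n | hole_code enc x j0 == b0].
Proof.
set S := [set x in _ | _] => large_S j b.
have [->|j_neq] := eqVneq j j0.
  have [->|b_neq] := eqVneq b b0; [right|left].
    suff -> : bit_count S j0 b0 = #|S| by rewrite leq_pmull.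
    by apply: eq_card => x; rewrite inE andb_idr // inE => /andP [].
  apply/eqP; rewrite cards_eq0; apply/eqP/setP => x; rewrite !inE.
  by apply/negP => /andP [/andP [_ /eqP ->]]; rewrite eq_sym (negbTE b_neq).
right; have j0_neq : j0 != j by rewrite eq_sym.
have small_u : (4 * bit_count S j (~~ b) < 3 * #|S|)%N.
  apply: leq_ltn_trans (ltn_trans (exp2_nbits_lt n_gt0) large_S).
  apply: leq_trans (card_holes_fix2 b0 (~~ b) j0_neq); rewrite leq_mul2l /=.
  by apply/subset_leq_card/subsetP => x; rewrite !inE => /andP [/andP [-> ->] ->].
by move: small_u; rewrite -(bit_countN S j b); lia.
Qed.

Lemma exists_balanced : exists S : {set pigeon},
  [/\ S \subset real_holes n, (3 * n <= 4 * #|S|)%N & balanced S].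
Proof.
have card_R := card_real_holes n.
case: (boolP [forall j, forall b, (bit_count (real_holes n) j b == 0%N)
                                  || (n <= 4 * bit_count (real_holes n) j b)%N]).
  move=> /forallP R_bal; exists (real_holes n); split=> //; first by rewrite card_R; lia.
  by move=> j b; rewrite card_R; have /forallP/(_ b)/orP [/eqP|] := R_bal j; [left|right].
rewrite negb_forall => /existsP [j0]; rewrite negb_forall => /existsP [b0].
rewrite negb_or -ltnNge => /andP [_ small_b0].
have := bit_countN (real_holes n) j0 b0; rewrite card_R => split_b0.
exists [set x in real_holes n | hole_code enc x j0 == ~~ b0]; split.
- by apply/subsetP => x; rewrite inE => /andP [].
- suff : (3 * n <= 4 * bit_count (real_holes n) j0 (~~ b0))%N by [].
  lia.
- by apply: balanced_bit_class; lia.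
Qed.

End Balanced.

Section Greedy.
Variables (n : nat) (enc : 'I_n -> bits n).
Local Notation pigeon := 'I_n.+1.
Local Notation L := (lit n.+1 n).
Variable H : {set pigeon}.
Hypothesis H_real : H \subset real_holes n.
Hypothesis H_balanced : balanced enc H.
Local Notation h := #|H|.
Variables (T : {set {set L}}) (w : nat).

Definition partial_matching (s : {perm pigeon}) (P : {set pigeon}) (t : nat) :=
  [/\ forall p, p \in P -> (s p < n)%N,
      forall x : pigeon, (x < n)%N -> x \notin s @: P -> x \in H
    & #|P| = (n - h + t)%N].

Definition survivors (s : {perm pigeon}) (P : {set pigeon}) :=
  [set D in T | (w <= #|relevant enc H P D|)%N && ~~ killed enc H s P D].

Definition falsified_by (p y : pigeon) (D : {set L}) :=
  [exists l in D, (l.1.1 == p) && (hole_code enc y l.1.2 != l.2)].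

Definition assign (s : {perm pigeon}) (p y : pigeon) := (tperm p (s^-1 y) * s)%g.

Lemma card_H_le_n : (h <= n)%N.
Proof. by have := subset_leq_card H_real; rewrite card_real_holes. Qed.

Section Step.
Variables (s : {perm pigeon}) (P : {set pigeon}) (t : nat).
Hypothesis s_matching : partial_matching s P t.

Lemma partial_matching_real : forall p, p \in P -> (s p < n)%N.
Proof. by case: s_matching. Qed.

Lemma partial_matching_unmatched :
  forall x : pigeon, (x < n)%N -> x \notin s @: P -> x \in H.
Proof. by case: s_matching. Qed.

Lemma card_partial_matching : #|P| = (n - h + t)%N.
Proof. by case: s_matching. Qed.

Lemma matched_holes_real : s @: P \subset real_holes n.
Proof. by apply/subsetP => _ /imsetP [p pP ->]; rewrite inE partial_matching_real. Qed.

Lemma card_H_matched : (#|H :&: s @: P| <= t)%N.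
Proof.
have : real_holes n :\: H \subset s @: P :\: H.
  apply/subsetP => x; rewrite !inE => /andP [xH xn]; rewrite xH.
  by apply: contraR xH; apply: partial_matching_unmatched.
move/subset_leq_card; rewrite cardsD (setIidPr H_real) card_real_holes.
have := cardsID H (s @: P).
rewrite card_imset ?card_partial_matching; last exact: perm_inj.
by rewrite setIC; move: #|H| #|H :&: _| #|_ :\: H| => ? ? ?; lia.
Qed.

Definition free_pairs :=
  [set x : pigeon * pigeon | (x.1 \notin P) && (x.2 \in real_holes n :\: s @: P)].

Lemma card_free_pairs : #|free_pairs| = ((h.+1 - t) * (h - t))%N.
Proof.
have -> : free_pairs = setX (~: P) (real_holes n :\: s @: P).
  by apply/setP => -[a b]; rewrite !inE.
rewrite cardsX cardsCs setCK card_ord cardsD (setIidPr matched_holes_real).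
rewrite card_imset ?card_partial_matching ?card_real_holes; last exact: perm_inj.
by have := card_H_le_n; move: #|H| => ? ?; congr (_ * _)%N; lia.
Qed.

Section Assign.
Variables (p y : pigeon).
Hypothesis p_free : p \notin P.
Hypothesis y_free : y \in real_holes n :\: s @: P.

Lemma assign_matched q : q \in P -> assign s p y q = s q.
Proof.
move: y_free; rewrite !inE => /andP [ysP _] qP; rewrite /assign permM tpermD //.
  by apply: contraNneq p_free => ->.
by apply: contraNneq ysP => yq; rewrite -[y](permKV s) imset_f // yq.
Qed.

Lemma assign_pigeon : assign s p y p = y.
Proof. by rewrite /assign permM tpermL permKV. Qed.

Lemma partial_matching_assign : partial_matching (assign s p y) (p |: P) t.+1.
Proof.
move: y_free; rewrite !inE => /andP [_ yn]; split.
- move=> q /setU1P [->|qP]; first by rewrite assign_pigeon.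
  by rewrite assign_matched ?partial_matching_real.
- move=> x xn xs; apply: partial_matching_unmatched => //.
  apply: contra xs => /imsetP [q qP ->].
  by rewrite -assign_matched // imset_f ?setU1r.
- rewrite cardsU1 p_free card_partial_matching.
  by have := card_H_le_n; move: #|H| => ? ?; lia.
Qed.

Lemma survivors_assign : survivors (assign s p y) (p |: P) \subset
  survivors s P :\: [set D in survivors s P | falsified_by p y D].
Proof.
move: y_free; rewrite !inE => /andP [_ yn].
apply/subsetP => D; rewrite !inE => /and3P [DT wide alive'].
have alive : ~~ killed enc H s P D.
  apply: contra alive' => /exists_inP [l lD /andP [lP l_false]].
  by apply/exists_inP; exists l; rewrite // setU1r //= assign_matched.
have -> : (w <= #|relevant enc H P D|)%N.
  apply: leq_trans wide _; apply/subset_leq_card/subsetP => q.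
  by rewrite !inE negb_or => /andP [/andP [_ ->] ->].
rewrite DT alive /= andbT.
apply: contra alive' => /exists_inP [l lD /andP [/eqP lp l_false]].
by apply/exists_inP; exists l; rewrite // lp setU11 /= assign_pigeon /lit_holds yn.
Qed.
End Assign.

Definition falsifying_pairs (D : {set L}) :=
  [set x in free_pairs | falsified_by x.1 x.2 D].

(* By balance, a quarter of [H] falsifies a non-forced literal, and at most
   [t] holes of [H] are already used. *)
Lemma card_falsifying_holes a D : a \in relevant enc H P D ->
  (h - 4 * t <= 4 * #|[set y | (a, y) \in falsifying_pairs D]|)%N.
Proof.
rewrite inE => /andP [aP /exists_inP [l lD /andP [/eqP la l_free]]].
set Y := [set y in H | hole_code enc y l.1.2 == ~~ l.2].
have [y yY] : exists y, y \in Y.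
  move: l_free; rewrite negb_forall_in => /exists_inP [y yH y_false].
  by exists y; rewrite inE yH; move: y_false; case: (hole_code _ _ _); case: l.2.
have h_Y : (h <= 4 * #|Y|)%N.
  have [|//] := H_balanced l.1.2 (~~ l.2).
  rewrite /bit_count -/Y => /eqP; rewrite cards_eq0 => /eqP Y0.
  by rewrite Y0 in_set0 in yY.
have Y_free : (#|Y| <= #|Y :\: s @: P| + t)%N.
  rewrite -(cardsID (s @: P) Y) addnC leq_add2l.
  apply: leq_trans card_H_matched; apply/subset_leq_card/setSI.
  by apply/subsetP => z; rewrite inE => /andP [].
have : Y :\: s @: P \subset [set y | (a, y) \in falsifying_pairs D].
  apply/subsetP => z; rewrite !inE => /andP [zs /andP [zH z_false]].
  have zn : (z < n)%N by move/subsetP/(_ z zH): H_real; rewrite inE.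
  rewrite aP zs zn /=; apply/exists_inP; exists l; rewrite // la eqxx /=.
  by move: z_false; case: (hole_code _ _ _); case: l.2.
move/subset_leq_card; move: #|Y| #|Y :\: _| #|[set y | _]| h_Y Y_free; lia.
Qed.

Lemma card_falsifying_pairs D : D \in survivors s P ->
  (w * (h - 4 * t) <= 4 * #|falsifying_pairs D|)%N.
Proof.
rewrite inE => /and3P [_ wide _]; rewrite card_set_pairs big_distrr /=.
rewrite (bigID (mem (relevant enc H P D))) /=; apply: leq_trans _ (leq_addr _ _).
apply: (@leq_trans (\sum_(a in relevant enc H P D) (h - 4 * t))).
  by rewrite sum_nat_const leq_mul2r wide orbT.
by apply: leq_sum => a; apply: card_falsifying_holes.
Qed.

Lemma exists_good_pair : (t < h)%N -> exists2 x, x \in free_pairs &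
  (#|survivors s P| * (w * (h - 4 * t))
     <= 4 * (h.+1 * h) * #|[set D in survivors s P | falsified_by x.1 x.2 D]|)%N.
Proof.
move=> t_lt_h; have : free_pairs != set0.
  by rewrite -card_gt0 card_free_pairs muln_gt0 !subn_gt0 t_lt_h ltnW.
set f := fun x : pigeon * pigeon => #|[set D in survivors s P | falsified_by x.1 x.2 D]|.
case/(exists_ge_average f) => x x_free x_avg; exists x => //.
have sum_f : (#|survivors s P| * (w * (h - 4 * t)) <= 4 * \sum_(x in free_pairs) f x)%N.
  rewrite exchange_card big_distrr -sum_nat_const; apply: leq_sum => D D_surv.
  exact: card_falsifying_pairs.
apply: leq_trans sum_f _; rewrite -mulnA leq_mul2l /=; apply: leq_trans x_avg _.
by rewrite card_free_pairs leq_mul2r leq_mul ?leq_subr ?orbT.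
Qed.

Lemma greedy_step : (t < h)%N -> exists s' P', partial_matching s' P' t.+1 /\
  (4 * (h.+1 * h) * #|survivors s' P'| + #|survivors s P| * (w * (h - 4 * t))
     <= 4 * (h.+1 * h) * #|survivors s P|)%N.
Proof.
case/exists_good_pair => -[p y]; rewrite inE /= => /andP [p_free y_free] good.
exists (assign s p y), (p |: P); split; first exact: partial_matching_assign.
have := subset_leq_card (survivors_assign p_free y_free).
rewrite cardsD (setIidPr _); last by apply/subsetP => D; rewrite inE => /andP [].
have F_le : (#|[set D in survivors s P | falsified_by p y D]| <= #|survivors s P|)%N.
  by apply/subset_leq_card/subsetP => D; rewrite inE => /andP [].
move/(leq_mul (leqnn (4 * (h.+1 * h)))); rewrite mulnBr.
move: good (leq_mul (leqnn (4 * (h.+1 * h))) F_le).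
move: (4 * (h.+1 * h))%N (#|survivors s P| * _)%N => K A.
by move: (K * _)%N (K * _)%N (K * _)%N; lia.
Qed.
End Step.
End Greedy.

Local Open Scope ring_scope.

Lemma le_expR_decay (R : realType) (K W0 W1 a : R) : 0 < K -> 0 <= W0 ->
  K * W1 + W0 * a <= K * W0 -> W1 <= W0 * expR (- (a / K)).
Proof.
move=> K_gt0 W0_ge0 step; apply: le_trans (ler_wpM2l W0_ge0 (expR_ge1Dx _)).
rewrite -(ler_pM2l K_gt0) [X in _ <= X](_ : _ = K * W0 - W0 * a); first lra.
by field; rewrite gt_eqF.
Qed.

Lemma greedy_budget n h s : (3 * n <= 4 * h)%N -> (41 <= n)%N ->
  (5 * s <= h < 5 * s + 5)%N ->
  (n * (4 * (h.+1 * h)) <= 80 * ((h - s - 1) * (s * (h + 2) - 2 * s * s)))%N.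
Proof. by move=> *; nia. Qed.

Lemma powR_six_fifths_le (R : realType) (x : R) : 0 <= x ->
  (6 / 5 : R) `^ (x / 16) <= expR (x / 80).
Proof.
move=> x_ge0; rewrite /powR ifF ?gt_eqF ?divr_gt0 // ler_expR.
have ln_le : ln (6 / 5 : R) <= 1 / 5.
  by rewrite (_ : 6 / 5 = 1 + 1 / 5) ?le_ln1Dx //; lra.
by rewrite (_ : x / 80 = x / 16 * (1 / 5)) ?ler_wpM2l ?divr_ge0 //; field.
Qed.

(* Step [u] of the greedy construction keeps at most a fraction
   [1 - w (h - 4u) / (4 (h + 1) h)] of the survivors, and
   [kill_gain h t] is the sum of [h - 4u] over [u < t]. *)
Definition kill_rate {R : realType} (h w : nat) : R := w%:R / (4 * (h.+1 * h))%:R.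

Definition kill_gain {R : realType} (h t : nat) : R :=
  t%:R * h%:R - 2 * t%:R * (t%:R - 1).

Lemma kill_exponent_ge (R : realType) n h s : (3 * n <= 4 * h)%N -> (41 <= n)%N ->
  (5 * s <= h < 5 * s + 5)%N ->
  n%:R / 80 <= kill_rate h (h - s - 1) * kill_gain h s :> R.
Proof.
move=> n_h n_ge s_h; have := greedy_budget n_h n_ge s_h.
have -> : kill_gain h s = (s * (h + 2) - 2 * s * s)%:R :> R.
  by rewrite /kill_gain natrB ?natrM ?natrD; [ring|nia].
rewrite /kill_rate mulrAC -natrM ler_pdivrMr ?ltr0n // mulrAC ler_pdivlMr.
  by move=> budget; rewrite -!natrM ler_nat [X in (_ <= X)%N]mulnC.
by rewrite ltr0n !muln_gt0 /=; lia.
Qed.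

Lemma expR_le2 (R : realType) (x : R) : 0 <= x -> x <= 1 / 2 -> expR x <= 2.
Proof.
move=> x_ge0 x_le; have e_gt0 := expR_gt0 x.
have : expR x * (1 - x) <= 1.
  have := ler_wpM2l (ltW e_gt0) (expR_ge1Dx (- x)).
  by rewrite expRN mulfV ?gt_eqF.
nra.
Qed.

Lemma ge41_of_expR_gt2 (R : realType) (n : nat) : 2 < expR (n%:R / 80) :> R -> (41 <= n)%N.
Proof.
rewrite ltNge; apply: contraNT; rewrite -ltnNge ltnS => n_small.
have n_le : n%:R <= 40 :> R by rewrite (ler_nat R n 40).
by apply: expR_le2; rewrite ?divr_ge0 //; lra.
Qed.

Section Iterate.
Variables (n : nat) (enc : 'I_n -> bits n) (H : {set 'I_n.+1}).
Hypotheses (H_real : H \subset real_holes n) (H_balanced : balanced enc H).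
Variables (T : {set {set lit n.+1 n}}) (w : nat) (R : realType).
Local Notation h := #|H|.
Local Notation survivors := (survivors enc H T w).

Lemma partial_matching_init : partial_matching H 1 (real_holes n :\: H) 0.
Proof.
split=> [p|x xn|]; first by rewrite perm1 !inE => /andP [].
  by apply: contraR => xH; apply/imsetP; exists x; rewrite ?perm1 // !inE xn xH.
by rewrite cardsD (setIidPr H_real) card_real_holes addn0.
Qed.

Lemma greedy_iterate t : (4 * t <= h)%N -> exists s P, partial_matching H s P t /\
  #|survivors s P|%:R <= #|T|%:R * expR (- (kill_rate h w * kill_gain h t)) :> R.
Proof.
elim: t => [_|t IHt le_th].
  exists 1%g, (real_holes n :\: H); split; first exact: partial_matching_init.
  have -> : kill_gain h 0 = 0 :> R by rewrite /kill_gain; ring.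
  rewrite mulr0 oppr0 expR0 mulr1 ler_nat.
  by apply/subset_leq_card/subsetP => D; rewrite inE => /andP [].
have [s [P [s_matching bound]]] := IHt (leq_trans (leq_mul (leqnn 4) (leqnSn t)) le_th).
have t_lt_h : (t < h)%N := leq_trans (leq_pmull t.+1 (isT : (0 < 4)%N)) le_th.
have [s' [P' [s'_matching step]]] := greedy_step H_real H_balanced T w s_matching t_lt_h.
exists s', P'; split=> //.
have le_4t : (4 * t <= h)%N by apply: leq_trans le_th; rewrite leq_mul2l leqnSn.
have gain_step : kill_rate h w * kill_gain h t.+1 =
    kill_rate h w * kill_gain h t + (w * (h - 4 * t))%:R / (4 * (h.+1 * h))%:R :> R.
  by rewrite /kill_rate /kill_gain !natrM natrB // natrM -[t.+1]addn1 natrD; ring.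
have K_gt0 : (0 : R) < (4 * (h.+1 * h))%:R.
  by rewrite ltr0n !muln_gt0 (leq_ltn_trans _ t_lt_h).
move: step; rewrite -(ler_nat R) natrD !(natrM R (4 * _)) (natrM R #|_|) => step.
have W1_le := le_expR_decay K_gt0 (ler0n _ _) step.
apply: le_trans W1_le _; rewrite gain_step opprD expRD mulrA.
by rewrite ler_wpM2r ?expR_ge0.
Qed.

End Iterate.

Lemma killing_restriction (R : realType) n (enc : 'I_n -> bits n)
    (T : {set {set lit n.+1 n}}) :
  injective enc -> (0 < n)%N -> #|T|%:R + 1 < expR (n%:R / 80) :> R ->
  exists (H : {set 'I_n.+1}) (s0 : {perm 'I_n.+1}) (P : {set 'I_n.+1}),
  [/\ forall p, p \in P -> (s0 p < n)%N,
      forall x : 'I_n.+1, (x < n)%N -> x \notin s0 @: P -> x \in H &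
      forall D, D \in T -> (#|~: P| <= #|relevant enc H P D| + 2)%N -> killed enc H s0 P D].
Proof.
move=> enc_inj n_gt0 small_T.
have [H [H_real H_large H_balanced]] := exists_balanced enc_inj n_gt0.
set h := #|H| in H_large; set s := (h %/ 5)%N; set w := (h - s - 1)%N.
have s_h : (5 * s <= h < 5 * s + 5)%N by rewrite mulnC leq_divM -mulSnr ltn_ceil.
have le_4s : (4 * s <= h)%N := leq_trans (leq_mul (leqnSn 4) (leqnn s)) (proj1 (andP s_h)).
have [s0 [P [[matched unmatched card_P] bound]]] :=
  greedy_iterate H_real H_balanced T w R le_4s.
have no_survivors : survivors enc H T w s0 P = set0.
  apply/eqP; rewrite -cards_eq0 -leqn0 -ltnS -(ltr_nat R) mulr1n.
  have [T0|T_gt0] := posnP #|T|.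
    by apply: le_lt_trans bound _; rewrite T0 mul0r.
  have n_ge : (41 <= n)%N.
    by apply: (@ge41_of_expR_gt2 R); move: T_gt0; rewrite -(ler1n R); lra.
  have exponent := kill_exponent_ge R H_large n_ge s_h.
  have T_small : #|T|%:R * expR (- (n%:R / 80)) < 1 :> R.
    rewrite -(ltr_pM2r (expR_gt0 (n%:R / 80))) -mulrA -expRD addNr expR0 mulr1 mul1r.
    lra.
  apply: le_lt_trans bound (le_lt_trans _ T_small).
  by rewrite ler_wpM2l // ler_expR lerN2.
exists H, s0, P; split=> // D DT wide; apply: contraT => alive.
suff : D \in survivors enc H T w s0 P by rewrite no_survivors in_set0.
rewrite inE DT alive andbT; move: wide; rewrite cardsCs setCK card_ord card_P.
have := subset_leq_card H_real; rewrite card_real_holes -/h /w.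
by move: #|relevant _ _ _ _| => ?; lia.
Qed.

Theorem theorem4 (R : realType) (n : nat) (hn : (1 <= n)%N)
  (enc : 'I_n -> bits n) (enc_inj : injective enc)
  (cs : seq (constr n.+1 n)) :
  SA_refutation R enc cs ->
  (6 / 5 : R) `^ (n%:R / 16) - 1 <= (#|SA_terms cs|)%:R.
Proof.
case=> valid no_solution; rewrite leNgt; apply/negP => few_terms.
have small_T : #|SA_terms cs|%:R + 1 < expR (n%:R / 80) :> R.
  by have := powR_six_fifths_le (ler0n R n); lra.
have [H [s0 [P [matched unmatched wide_killed]]]] :=
  killing_restriction enc_inj hn small_T.
have [Z [Z0 Z_sat]] := SA_solution enc_inj matched unmatched wide_killed R (subxx _).
by apply: no_solution; exists Z; split=> // c c_cs; apply: Z_sat (valid c c_cs).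
Qed.
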